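(* Let $|\phi_{\mathrm w}(\theta)\rangle$ be the 2-d Ising whip state on $\Lambda_L$ ($L\ge2$). Let $\mathcal B$ be the set of sites of $\Lambda_L$ having at least one coordinate in $\{0,L-1\}$, excluding $(0,0)$ and $(L-1,L-1)$, and $\hat T=\prod_{i\in\mathcal B}Z_i$. Then for all $\theta$ there is a phase $\phi\in\mathbb R$ with $$|\phi_{\mathrm w}(\theta+\pi)\rangle=e^{\mathrm i\phi}\,\hat T\,|\phi_{\mathrm w}(\theta)\rangle.$$ Moreover, with $\partial X=\sum_{i\in\mathcal B'}X_i$, $\mathcal B'=\{(L-1,b):0\le b\le L-2\}\cup\{(a,L-1):0\le a\le L-2\}\subseteq\mathcal B$, one has $\hat T\,\partial X=-\partial X\,\hat T$; in particular $\langle\partial X\rangle_{\theta+\pi}=-\langle\partial X\rangle_\theta$ while $\langle Z_iZ_j\rangle_{\theta+\pi}=\langle Z_iZ_j\rangle_\theta$ for all sites $i,j$.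
   Context: 2-d Ising whip circuit: for $L\ge2$, $\Lambda_L=\{0,\dots,L-1\}^2$, one qubit per site, $N=L^2$. Directed edges $(a,b)\to(a+1,b)$ and $(a,b)\to(a,b+1)$ whenever the target lies in $\Lambda_L$. $\deg^-(v)$ is the number of incoming edges of $v$. For each edge $u\to v$ let $G_{u\to v}(\theta)=\exp(-\mathrm i\,\theta\,Z_uY_v/\deg^-(v))$ with Pauli matrices $X,Y,Z$. The whip state is $|\phi_{\mathrm w}(\theta)\rangle=\prod G_{u\to v}(\theta)|+\rangle^{\otimes N}$, $|+\rangle=(|0\rangle+|1\rangle)/\sqrt2$, with gates applied in order of increasing $a+b$ of the target $v=(a,b)$. $\langle A\rangle_\theta=\langle\phi_{\mathrm w}(\theta)|A|\phi_{\mathrm w}(\theta)\rangle$. *)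

From HB Require Import structures.
From mathcomp Require Import all_boot all_order all_algebra.
From mathcomp Require Import complex.
From mathcomp Require Import reals trigo.

Set Implicit Arguments.
Unset Strict Implicit.
Unset Printing Implicit Defensive.

Import Order.TTheory GRing.Theory Num.Theory.
Local Open Scope ring_scope.

Section Whip.
Variable R : realType.
Variable L : nat.

Local Notation C := (complex R).

Definition iC : C := Complex 0 1.
Definition rC (x : R) : C := Complex x 0.
Definition cconj (z : C) : C := let: Complex a b := z in Complex a (- b).

Definition site := ('I_L * 'I_L)%type.
(* computational basis configurations: bit x_i for each site i
   (false = |0>, true = |1>) *)
Definition config := {ffun site -> bool}.
Definition state := config -> C.
Definition op := state -> state.

Definition flip (i : site) (x : config) : config :=
  [ffun j => if j == i then ~~ x j else x j].

(* Pauli operators acting on qubit i (tensored with identity elsewhere):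
   X|0>=|1>, X|1>=|0>;  Y|0>= i|1>, Y|1> = -i|0>;  Z|0>=|0>, Z|1>=-|1>. *)
Definition pauliX (i : site) : op := fun psi x => psi (flip i x).
Definition pauliY (i : site) : op :=
  fun psi x => (if x i then iC else - iC) * psi (flip i x).
Definition pauliZ (i : site) : op :=
  fun psi x => (if x i then -1 else 1) * psi x.

Definition addop (A B : op) : op := fun psi x => A psi x + B psi x.
Definition zeroop : op := fun _ _ => 0.

Definition edge (u v : site) : bool :=
  ((v.1 : nat) == u.1.+1) && ((v.2 : nat) == u.2)
  || ((v.1 : nat) == u.1) && ((v.2 : nat) == u.2.+1).

Definition indeg (v : site) : nat := #|[pred u | edge u v]|.

(* G_{u->v}(theta) = exp(-i theta Z_u Y_v / deg^-(v)).  Since (Z_u Y_v)^2 = 1,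
   this exponential equals cos(t) 1 - i sin(t) Z_u Y_v with t = theta/deg^-(v). *)
Definition gate (theta : R) (u v : site) : op :=
  fun psi x =>
    let t := theta / (indeg v)%:R in
    rC (cos t) * psi x - iC * rC (sin t) * pauliZ u (pauliY v psi) x.

(* targets sorted by increasing a+b; edges listed in the order of
   application (gates of the same level a+b commute, so ties are immaterial) *)
Definition level (v : site) : nat := v.1 + v.2.
Definition sorted_sites : seq site :=
  sort (fun v w => leq (level v) (level w)) (enum {: site}).
Definition edge_list : seq (site * site) :=
  flatten [seq [seq (u, v) | u <- enum {: site} & edge u v]
          | v <- sorted_sites].

(* |+>^{\otimes N}: every amplitude equals (1/sqrt 2)^N, N = L^2 *)
Definition plus_state : state := fun _ => rC ((Num.sqrt 2)^-1 ^+ (L * L)).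

Definition whip (theta : R) : state :=
  foldl (fun psi e => gate theta e.1 e.2 psi) plus_state edge_list.

Definition expect (A : op) (psi : state) : C :=
  \sum_(x : config) cconj (psi x) * A psi x.

Definition inB (i : site) : bool :=
  [|| (i.1 : nat) == 0, (i.1 : nat) == L.-1, (i.2 : nat) == 0
    | (i.2 : nat) == L.-1]
  && ~~ (((i.1 : nat) == 0) && ((i.2 : nat) == 0))
  && ~~ (((i.1 : nat) == L.-1) && ((i.2 : nat) == L.-1)).

Definition inB' (i : site) : bool :=
  ((i.1 : nat) == L.-1) && ((i.2 : nat) <= L - 2)%N
  || ((i.2 : nat) == L.-1) && ((i.1 : nat) <= L - 2)%N.

(* T = prod_{i in B} Z_i (Z's commute, so the order is immaterial) *)
Definition Top : op :=
  foldr (fun i A => fun psi => pauliZ i (A psi)) id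
        [seq i <- enum {: site} | inB i].

Definition dX : op :=
  foldr (fun i A => addop (pauliX i) A) zeroop
        [seq i <- enum {: site} | inB' i].

Definition ZZ (i j : site) : op := fun psi => pauliZ i (pauliZ j psi).

Definition expi (phi : R) : C := Complex (cos phi) (sin phi).

End Whip.

(* Shifting theta by pi shifts the angle of every gate into v by pi / deg^-(v).
   A lone gate into v only changes sign, while for deg^-(v) = 2 one has
   G(t + pi/2) = -i Z_u Y_v G(t), so the two gates into v together pick up
   -Z_u1 Z_u2.  These Z's commute with every later gate, whose target lies on a
   higher level a + b, and can be pushed to the end of the circuit: up to a sign,
   whip(theta + pi) = prod_w Z_w^(n_w) whip(theta), with n_w the number of
   in-degree-2 successors of w.  On the square lattice n_w is odd exactly on B.
   Finally T is a real diagonal +-1 operator, so it commutes with Z_i Z_j and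
   anticommutes with X_i for i in B' (a subset of B), which gives the expectation
   values. *)

From HB Require Import structures.
From mathcomp Require Import all_boot all_order all_algebra.
From mathcomp Require Import complex.
From mathcomp Require Import reals trigo.
From mathcomp Require Import zify ring.
From Stdlib Require Import FunctionalExtensionality.
Import GRing.Theory.
Set Implicit Arguments.
Unset Strict Implicit.
Local Open Scope ring_scope.

Section WhipSymmetry.
Variable R : realType.
Variable L : nat.
Local Notation C := (R[i]).
Local Notation site := (site L).
Local Notation config := (config L).
Local Notation state := (state R L).
Local Notation op := (op R L).
Implicit Types (theta : R) (u v w : site) (x : config) (psi : state).

Lemma flip_eq v x : flip v x v = ~~ x v.
Proof. by rewrite ffunE eqxx. Qed.

Lemma flip_neq v w x : w != v -> flip v x w = x w.
Proof. by rewrite ffunE => /negbTE ->. Qed.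

Lemma flipK v : involutive (flip v).
Proof. by move=> x; apply/ffunP => w; rewrite !ffunE; case: eqP; rewrite ?negbK. Qed.

Definition signop (e : config -> nat) : op := fun psi x => (-1) ^+ e x * psi x.

(* The Z-string prod_w Z_w^(m w) is [signop (zexp m)]. *)
Definition zexp (m : site -> nat) x : nat := (\sum_w m w * x w)%N.

Lemma signopD e1 e2 psi :
  signop e1 (signop e2 psi) = signop (fun x => (e1 x + e2 x)%N) psi.
Proof. by apply: functional_extensionality => x; rewrite /signop exprD mulrA. Qed.

Lemma signop_odd e1 e2 :
  (forall x, odd (e1 x) = odd (e2 x)) -> signop e1 = signop e2.
Proof.
move=> he; do 2 apply: functional_extensionality => ?.
by rewrite /signop -signr_odd he signr_odd.
Qed.

Lemma eq_zexp m1 m2 x : m1 =1 m2 -> zexp m1 x = zexp m2 x.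
Proof. by move=> hm; apply: eq_bigr => w _; rewrite hm. Qed.

Lemma zexpD m1 m2 x : (zexp (fun w => m1 w + m2 w) x = zexp m1 x + zexp m2 x)%N.
Proof. by rewrite /zexp -big_split; apply: eq_bigr => w _; rewrite mulnDl. Qed.

Lemma zexp_mem (s : seq site) x :
  uniq s -> zexp (fun w => w \in s) x = (\sum_(u <- s) x u)%N.
Proof.
move=> us; rewrite big_uniq // big_mkcond /zexp.
by apply: eq_bigr => w _; case: (w \in s); rewrite ?mul1n.
Qed.

Lemma odd_zexp m1 m2 x :
  (forall w, odd (m1 w) = odd (m2 w)) -> odd (zexp m1 x) = odd (zexp m2 x).
Proof.
move=> hm; rewrite /zexp !(big_morph odd oddD (erefl : odd 0 = false)).
by apply: eq_bigr => w _; rewrite !oddM hm.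
Qed.

Lemma signr_zexp_flip m v x :
  (-1) ^+ zexp m (flip v x) = (-1) ^+ m v * (-1) ^+ zexp m x :> C.
Proof.
rewrite /zexp (bigD1 v) //= [in RHS](bigD1 v) //= flip_eq.
rewrite (eq_bigr (fun w => (m w * x w)%N)) => [|w hw]; last by rewrite flip_neq.
rewrite !exprD mulrA; congr (_ * _).
by case: (x v); rewrite /= ?muln0 ?muln1 ?expr0 ?mulr1 // -expr2 sqrr_sign.
Qed.

Lemma pauliZE u psi x : pauliZ u psi x = (-1) ^+ x u * psi x.
Proof. by rewrite /pauliZ; case: (x u). Qed.

Lemma pauliYE v psi x : pauliY v psi x = iC R * (-1) ^+ (~~ x v) * psi (flip v x).
Proof. by rewrite /pauliY; case: (x v); rewrite ?mulr1 ?mulrN1. Qed.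

Lemma iC_sqr : iC R * iC R = -1.
Proof. by apply/eqP; rewrite eq_complex /=; apply/andP; split; apply/eqP; ring. Qed.

Lemma gateE theta u v psi x :
  gate theta u v psi x = rC (cos (theta / (indeg v)%:R)) * psi x
    + rC (sin (theta / (indeg v)%:R)) * (-1) ^+ (x u + ~~ x v) * psi (flip v x).
Proof.
rewrite /gate pauliZE pauliYE exprD.
set c := rC _; set s := rC _; set a := (-1) ^+ _; set b := (-1) ^+ _.
have -> : iC R * s * (a * (iC R * b * psi (flip v x)))
          = iC R * iC R * (s * (a * b) * psi (flip v x)) by ring.
rewrite iC_sqr; ring.
Qed.

Lemma gate_signop theta u v e psi :
  (forall x, (-1) ^+ e (flip v x) = (-1) ^+ e x :> C) ->
  gate theta u v (signop e psi) = signop e (gate theta u v psi).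
Proof.
by move=> he; apply: functional_extensionality => x; rewrite /signop !gateE he; ring.
Qed.

Lemma rCN (a : R) : rC (- a) = - rC a.
Proof. by apply/eqP; rewrite eq_complex /= oppr0 !eqxx. Qed.

Lemma gate_shift_indeg1 theta u v psi : indeg v = 1%N ->
  gate (theta + pi) u v psi = signop (fun=> 1%N) (gate theta u v psi).
Proof.
move=> h1; apply: functional_extensionality => x.
by rewrite /signop !gateE h1 !divr1 cosDpi sinDpi !rCN; ring.
Qed.

Lemma gate_shift_indeg2 theta u1 u2 v psi : indeg v = 2%N -> u1 != v -> u2 != v ->
  gate (theta + pi) u2 v (gate (theta + pi) u1 v psi)
  = signop (fun x => (1 + (x u1 + x u2))%N) (gate theta u2 v (gate theta u1 v psi)).
Proof.
move=> h2 u1v u2v; apply: functional_extensionality => x.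
rewrite /signop !gateE h2 mulrDl cosDpihalf sinDpihalf rCN flipK flip_eq !flip_neq //.
set c := rC (cos _); set s := rC (sin _).
by case: (x u1); case: (x u2); case: (x v); rewrite /=; ring.
Qed.

Lemma edge_level u v : edge u v -> level v = (level u).+1.
Proof.
rewrite /edge /level => /orP [/andP [/eqP -> /eqP ->] | /andP [/eqP -> /eqP ->]].
  by rewrite addSn.
by rewrite addnS.
Qed.

Lemma edge_neq u v : edge u v -> u != v.
Proof. by move=> /edge_level hl; apply/eqP => uv; move: hl; rewrite uv => /n_Sn. Qed.

Lemma sum_site_at (a b : nat) (Q : nat -> nat -> bool) :
  (\sum_(v : site) [&& (v.1 : nat) == a, (v.2 : nat) == b & Q v.1 v.2])%N
  = [&& a < L, b < L & Q a b]%N.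
Proof.
case: (ltnP a L) => ha; case: (ltnP b L) => hb /=; last first.
- by rewrite big1 // => v _; rewrite (ltn_eqF (leq_trans (ltn_ord v.1) ha)).
- by rewrite big1 // => v _; rewrite (ltn_eqF (leq_trans (ltn_ord v.1) ha)).
- by rewrite big1 // => v _; rewrite (ltn_eqF (leq_trans (ltn_ord v.2) hb)) andbF.
rewrite (bigD1 (Ordinal ha, Ordinal hb)) //= !eqxx /= big1 ?addn0 // => -[i j] /= hne.
apply/eqP; rewrite eqb0; apply: contra hne => /and3P [/eqP hi /eqP hj _].
by rewrite xpair_eqE -!val_eqE /= hi hj !eqxx.
Qed.

Lemma indegE (v : site) : indeg v = ((0 < v.1) + (0 < v.2))%N.
Proof.
rewrite /indeg -sum1_card big_mkcond /=.
rewrite (eq_bigr (fun u : site => [&& (u.1 : nat) == v.1.-1, (u.2 : nat) == v.2 & 0 < v.1]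
   + [&& (u.1 : nat) == v.1, (u.2 : nat) == v.2.-1 & 0 < v.2])%N) => [|u _]; last first.
  rewrite inE /edge.
  case: u v => [[c hc] [d hd]] [[a ha] [b hb]] /=.
  do !case: eqP => //=; lia.
rewrite big_split /= !(sum_site_at _ _ (fun _ _ => _)).
by rewrite !ltn_ord !(leq_ltn_trans (leq_pred _) (ltn_ord _)).
Qed.

Definition deg2_succs (s : seq site) (w : site) : nat :=
  (\sum_(v <- s) ((indeg v == 2) && edge w v))%N.

Lemma deg2_succs_sorted w :
  deg2_succs (sorted_sites L) w
  = ((w.1.+1 < L) && (0 < w.2) + (w.2.+1 < L) && (0 < w.1))%N.
Proof.
have hp : perm_eq (sorted_sites L) (enum {: site}) by rewrite perm_sort.
rewrite /deg2_succs (perm_big _ hp) big_enum /=.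
rewrite (eq_bigr (fun v : site =>
   [&& (v.1 : nat) == w.1.+1, (v.2 : nat) == w.2 & (0 < v.1) && (0 < v.2)]
   + [&& (v.1 : nat) == w.1, (v.2 : nat) == w.2.+1 & (0 < v.1) && (0 < v.2)])%N)
   => [|v _]; last first.
  rewrite indegE /edge.
  case: v w => [[a ha] [b hb]] [[c hc] [d hd]] /=.
  do !case: eqP => //=; lia.
rewrite big_split /= !(sum_site_at _ _ (fun a b => (0 < a) && (0 < b))%N).
by rewrite !ltn_ord /= andbT.
Qed.

Lemma odd_deg2_succs_sorted w : (1 < L)%N ->
  odd (deg2_succs (sorted_sites L) w) = inB w.
Proof.
rewrite deg2_succs_sorted /inB; case: w => [[a ha] [b hb]] /= hL.
have -> : (a.+1 < L)%N = (a != L.-1) by apply/idP/idP; lia.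
have -> : (b.+1 < L)%N = (b != L.-1) by apply/idP/idP; lia.
rewrite !lt0n.
by case: (a =P 0) => ?; case: (a =P L.-1) => ?; case: (b =P 0) => ?;
  case: (b =P L.-1) => ? //=; lia.
Qed.

Definition in_edges v : seq (site * site) :=
  [seq (u, v) | u <- enum {: site} & edge u v].

Definition gates theta (es : seq (site * site)) psi : state :=
  foldl (fun psi e => gate theta e.1 e.2 psi) psi es.

Lemma gates_cat theta es1 es2 psi :
  gates theta (es1 ++ es2) psi = gates theta es2 (gates theta es1 psi).
Proof. exact: foldl_cat. Qed.

Lemma gates_signop theta es e psi :
  (forall ed x, ed \in es -> (-1) ^+ e (flip ed.2 x) = (-1) ^+ e x :> C) ->
  gates theta es (signop e psi) = signop e (gates theta es psi).
Proof.
elim: es psi => [|ed es IH] psi //= he.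
rewrite gate_signop => [|x]; last by apply: he; rewrite mem_head.
by apply: IH => ed' x hed'; apply: he; rewrite inE hed' orbT.
Qed.

Lemma in_edges_shift theta v psi :
  gates (theta + pi) (in_edges v) psi =
  signop (fun x => ((0 < indeg v) + zexp (fun w => (indeg v == 2) && edge w v) x)%N)
    (gates theta (in_edges v) psi).
Proof.
rewrite /in_edges; set p := [seq u <- _ | _].
have size_p : size p = indeg v.
  rewrite size_filter -sum1_count big_enum_cond /indeg -sum1_card.
  by apply: eq_bigl => u.
have mem_p w : (w \in p) = edge w v by rewrite mem_filter mem_enum andbT.
have : uniq p by rewrite filter_uniq // enum_uniq.
case e: p size_p => [|u1 [|u2 [|u3 q]]] /= size_p uniq_p.
- rewrite -size_p; apply: functional_extensionality => x.
  by rewrite /signop /zexp big1 //= mul1r.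
- rewrite gate_shift_indeg1 // -size_p; congr (signop _ _).
  apply: functional_extensionality => x.
  by rewrite /zexp big1.
- have [e1 e2] : edge u1 v /\ edge u2 v by rewrite -!mem_p e !inE !eqxx orbT.
  rewrite gate_shift_indeg2 ?edge_neq // -size_p; congr (signop _ _).
  apply: functional_extensionality => x.
  rewrite (@eq_zexp _ (fun w => w \in [:: u1; u2])) => [|w]; last by rewrite -e mem_p.
  by rewrite zexp_mem // big_cons big_seq1.
- by move: size_p; rewrite indegE; case: (0 < _)%N; case: (0 < _)%N.
Qed.

Lemma in_edges_flatten_shift theta (s : seq site) psi :
  pairwise (fun v w => (level v <= level w)%N) s ->
  gates (theta + pi) (flatten [seq in_edges v | v <- s]) psi =
  signop (fun x => (count (fun v => 0 < indeg v) s + zexp (deg2_succs s) x)%N)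
    (gates theta (flatten [seq in_edges v | v <- s]) psi).
Proof.
elim: s psi => [|v s IH] psi /=.
  move=> _; apply: functional_extensionality => x.
  by rewrite /signop /zexp big1 ?mul1r // => w _; rewrite /deg2_succs big_nil.
case/andP => /allP v_low s_sorted.
rewrite !gates_cat in_edges_shift gates_signop; last first.
  move=> _ x /flatten_mapP [v' v's /mapP [u _ ->]] /=.
  have /negbTE v'v : ~~ edge v' v.
    by apply/negP => /edge_level hl; move: (v_low v' v's); rewrite hl ltnn.
  by rewrite !exprD signr_zexp_flip v'v andbF mul1r.
rewrite IH // signopD; congr (signop _ _); apply: functional_extensionality => x.
rewrite (@eq_zexp (deg2_succs (v :: s))
                  (fun w => (((indeg v == 2) && edge w v) + deg2_succs s w)%N)).
  by rewrite zexpD /= addnACA.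
by move=> w; rewrite /deg2_succs big_cons.
Qed.

Lemma whip_shift theta : (1 < L)%N ->
  exists k, whip (theta + pi)
            = signop (fun x => (k + zexp (fun w => inB w) x)%N) (whip theta).
Proof.
move=> hL; exists (count (fun v => 0 < indeg v)%N (sorted_sites L)).
have sorted_levels : pairwise (fun v w => (level v <= level w)%N) (sorted_sites L).
  rewrite -sorted_pairwise => [|u v w]; last exact: leq_trans.
  by apply: sort_sorted => v w; apply: leq_total.
rewrite /whip -/(gates _ _ _) in_edges_flatten_shift //.
apply: equal_f; apply: signop_odd => x.
by rewrite !oddD; congr addb; apply: odd_zexp => w; rewrite oddb odd_deg2_succs_sorted.
Qed.

Lemma TopE psi : Top psi = signop (zexp (fun w => inB w)) psi.
Proof.
apply: functional_extensionality => x; rewrite /Top /signop /zexp.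
rewrite (_ : (\sum_w inB w * x w = \sum_(w <- [seq w <- enum {: site} | inB w]) x w)%N);
  last first.
  rewrite big_filter big_enum_cond [RHS]big_mkcond; apply: eq_bigr => w _ /=.
  by case: (inB w); rewrite ?mul1n.
elim: [seq w <- _ | _] => [|w s IH] /=; first by rewrite big_nil mul1r.
by rewrite big_cons pauliZE IH exprD mulrA.
Qed.

Lemma inB'_inB w : (1 < L)%N -> inB' w -> inB w.
Proof.
rewrite /inB' /inB; case: w => [[a ha] [b hb]] /= hL.
move=> /orP [/andP [/eqP h1 h2]|/andP [/eqP h1 h2]];
  case: (a =P 0%N) => ?; case: (a =P L.-1) => ?; case: (b =P 0%N) => ?;
  case: (b =P L.-1) => ? //=; lia.
Qed.

Lemma signr_boundary_flip i x : (1 < L)%N -> inB' i ->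
  (-1) ^+ zexp (fun w => inB w) (flip i x) = - (-1) ^+ zexp (fun w => inB w) x :> C.
Proof. by move=> hL hi; rewrite signr_zexp_flip inB'_inB // mulN1r. Qed.

Lemma dX_signop e psi :
  (forall i x, inB' i -> (-1) ^+ e (flip i x) = - (-1) ^+ e x :> C) ->
  dX (signop e psi) = (fun x => - signop e (dX psi) x).
Proof.
move=> he; apply: functional_extensionality => x; rewrite /dX /signop.
have : all (fun i => inB' i) [seq i <- enum {: site} | inB' i] by apply: filter_all.
elim: [seq i <- _ | _] => [|i s IH] /=; first by rewrite /zeroop mulr0 oppr0.
by case/andP => hi /IH; rewrite /addop /pauliX he // => ->; ring.
Qed.

Lemma ZZ_signop i j e psi : ZZ i j (signop e psi) = signop e (ZZ i j psi).
Proof. by apply: functional_extensionality => x; rewrite /ZZ /signop !pauliZE; ring. Qed.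

Lemma cconj_signr n (z : C) : cconj ((-1) ^+ n * z) = (-1) ^+ n * cconj z.
Proof. by rewrite -signr_odd; case: (odd n); rewrite ?mul1r // !mulN1r; case: z. Qed.

Lemma expect_signop e (A : op) (c : C) psi :
  (forall phi x, A (signop e phi) x = c * signop e (A phi) x) ->
  expect A (signop e psi) = c * expect A psi.
Proof.
move=> hA; rewrite /expect mulr_sumr; apply: eq_bigr => x _.
rewrite hA /signop cconj_signr; set s := (-1) ^+ e x.
have ss : s * s = 1 by rewrite -expr2 sqrr_sign.
by transitivity (c * (s * s) * (cconj (psi x) * A psi x)); [ring | rewrite ss mulr1].
Qed.

Lemma expi_natmul_pi k : expi (k%:R * pi) = (-1) ^+ k :> C.
Proof.
elim: k => [|k IH]; first by rewrite mul0r /expi cos0 sin0.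
by rewrite mulrSr mulrDl mul1r exprS mulN1r -IH /expi cosDpi sinDpi.
Qed.

End WhipSymmetry.

Theorem mainTheorem11 (R : realType) (L : nat) (hL : (2 <= L)%N) :
  (forall theta : R, exists phi : R,
      @whip R L (theta + pi) =
      (fun x => expi phi * @Top R L (@whip R L theta) x))
  /\ (forall psi : state R L,
        @Top R L (@dX R L psi) = (fun x => - @dX R L (@Top R L psi) x))
  /\ (forall theta : R,
        expect (@dX R L) (@whip R L (theta + pi))
        = - expect (@dX R L) (@whip R L theta))
  /\ (forall (theta : R) (i j : site L),
        expect (@ZZ R L i j) (@whip R L (theta + pi))
        = expect (@ZZ R L i j) (@whip R L theta)).
Proof.
split; [|split; [|split]].
- move=> theta; have [k ->] := whip_shift theta hL.
  exists (k%:R * pi); apply: functional_extensionality => x.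
  by rewrite TopE /signop expi_natmul_pi exprD mulrA.
- move=> psi; rewrite !TopE dX_signop => [|i x]; last exact: signr_boundary_flip.
  by apply: functional_extensionality => x; rewrite opprK.
- move=> theta; have [k ->] := whip_shift theta hL.
  rewrite (expect_signop (c := -1)) ?mulN1r // => phi x.
  rewrite dX_signop ?mulN1r // => i y hi.
  by rewrite !exprD signr_boundary_flip // mulrN.
- move=> theta i j; have [k ->] := whip_shift theta hL.
  by rewrite (expect_signop (c := 1)) ?mul1r // => phi x; rewrite ZZ_signop mul1r.
Qed.
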